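(* Let $m\geq 2$ be an integer and $n'=2^{m-1}$. Then the number of subgroups of the direct product $\mathbb{Z}_2\times Q_{4n'}$ is $$|L(\mathbb{Z}_2\times Q_{4n'})|=5\sigma(n')+3\tau(n')-2n'+2.$$
   Context: $L(G)$ denotes the set of all subgroups of a group $G$. $Q_{4n'}=\langle x,y\mid x^{2n'}=e,\ y^2=x^{n'},\ y^{-1}xy=x^{-1}\rangle$ is the generalized quaternion group of order $4n'$. For a positive integer $k$, $\tau(k)$ is the number of positive divisors of $k$ and $\sigma(k)$ is their sum. *)

From mathcomp Require Import all_boot all_fingroup all_solvable extremal zmodp.
Set Implicit Arguments.
Unset Strict Implicit.
Unset Printing Implicit Defensive.

Definition tau (k : nat) : nat := size (divisors k).
Definition sigma (k : nat) : nat := \sum_(d <- divisors k) d.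

(* The direct product Z_2 x Q_{4n'} as a finite group type, where 'I_2 is the
   additive cyclic group Z/2Z (zmodp) and
   'Q_k is MathComp's generalized quaternion group of order k (k = 2^e >= 8). *)
Definition Z2xQ (k : nat) : finGroupType := prod 'I_2 (quaternion_gtype k).

From mathcomp Require Import all_boot all_fingroup all_solvable extremal zmodp.
From mathcomp Require Import zify.
Set Implicit Arguments. Unset Strict Implicit. Unset Printing Implicit Defensive.

(* Let Q = Q_(2^(k+1)) with x of order 2^k, G = Z_2 x Q, A = Z_2 x <x> and
   B = 1 x <x>, so that B < A < G both have index 2.  When A has index 2 in G,
   a subgroup H of G not contained in A is C :|: C :* t with C = H :&: A and t
   outside A normalising C with t ^+ 2 in C, and exactly the |C| elements of
   H :\: A give H.  In G every element outside A squares to the central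
   involution w and inverts A by conjugation, so a subgroup C of A has
   2^(k+1)/|C| such extensions if w \in C and none otherwise.  Counting the
   subgroups of the abelian group A over B in the same way reduces everything
   to the k+1 subgroups of the cyclic group B of order 2^k; the resulting sum
   is 4 * 2^k + 3k - 3 = 5 sigma(n') + 3 tau(n') - 2n' + 2 for n' = 2^(k-1). *)

Lemma divisors_pfactor p k :
  prime p -> divisors (p ^ k) = [seq p ^ j | j <- iota 0 k.+1].
Proof.
move=> p_pr; have p_gt1 := prime_gt1 p_pr.
apply: (irr_sorted_eq ltn_trans ltnn (sorted_divisors_ltn _)).
  rewrite sorted_map; apply: sub_sorted (iota_ltn_sorted 0 k.+1) => i j /=.
  by rewrite ltn_exp2l.
move=> d; rewrite -dvdn_divisors ?expn_gt0 ?prime_gt0 //.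
apply/(dvdn_pfactor _ _ p_pr)/mapP => [[j jk ->] | [j]]; last first.
  by rewrite mem_iota ltnS => jk ->; exists j.
by exists j; rewrite // mem_iota ltnS.
Qed.

Lemma sum_2expn n : \sum_(i < n) 2 ^ i = (2 ^ n).-1.
Proof.
elim: n => [|n IHn]; first by rewrite big_ord0.
by rewrite big_ord_recr /= IHn expnS; case: (2 ^ n) (expn_gt0 2 n) => // m _; lia.
Qed.

Lemma tau_pfactor p k : prime p -> tau (p ^ k) = k.+1.
Proof. by move=> p_pr; rewrite /tau divisors_pfactor // size_map size_iota. Qed.

Lemma sigma_2expn k : sigma (2 ^ k) = (2 ^ k.+1).-1.
Proof. by rewrite /sigma divisors_pfactor // big_map -val_enum_ord big_map big_enum sum_2expn. Qed.

Lemma sum_contributions k : 0 < k ->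
  \sum_(0 <= i < k.+1) (if i == 0 then 5 else if i == k then 3 else 3 + 4 * 2 ^ i)
    = 4 * 2 ^ k + 3 * k - 3.
Proof.
case: k => // k _; rewrite big_nat_recr // big_nat_recl //= eqxx.
rewrite (eq_big_nat _ _ (F2 := fun i => 3 + 8 * 2 ^ i)) => [|i /andP[_ ik]]; last first.
  by rewrite ltn_eqF // expnS mulnA.
rewrite big_split sum_nat_const_nat -big_distrr big_mkord sum_2expn /= expnS.
by case: (2 ^ k) (expn_gt0 2 k) => // m _; lia.
Qed.

Local Open Scope group_scope.

Section IndexTwo.

Variables (gT : finGroupType) (G A : {group gT}).
Hypotheses (sAG : A \subset G) (iGA : #|G : A| = 2).

Lemma index2_mulg_out g h : g \in G :\: A -> h \in G :\: A -> g * h \in A.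
Proof.
move=> G'g /setDP[Gh nAh].
have : h^-1 \in A :* g by rewrite (rcoset_index2 sAG iGA G'g) inE !groupV Gh nAh.
by rewrite mem_rcoset -invMg groupV.
Qed.

Lemma setD_index2 (H : {group gT}) t :
  H \subset G -> t \in H :\: A -> H :\: A = (H :&: A) :* t.
Proof.
move=> sHG /setDP[Ht nAt]; have G'ti : t^-1 \in G :\: A.
  by rewrite inE !groupV nAt (subsetP sHG).
apply/setP=> u; rewrite mem_rcoset !inE groupMr ?groupV // andbC.
have [Hu | //] := boolP (u \in H); rewrite /=.
apply/idP/idP => [nAu | Autv]; first by rewrite index2_mulg_out // inE nAu (subsetP sHG).
by apply: contra nAt => Au; rewrite -groupV -(groupMl _ Au).
Qed.

Lemma card_index2_out (H : {group gT}) :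
  H \subset G -> ~~ (H \subset A) -> #|H| = (#|H :&: A| * 2)%N.
Proof.
move=> sHG /subsetPn[t Ht nAt].
rewrite -(cardsID A H) (setD_index2 sHG (t := t)) ?inE ?Ht ?nAt // card_rcoset.
by rewrite muln2 addnn.
Qed.

Definition extensions (C : {set gT}) :=
  [set H : {group gT} | [&& H \subset G, ~~ (H \subset A) & H :&: A == C]].

Definition extenders (C : {set gT}) :=
  [set t in G :\: A | (t \in 'N(C)) && (t ^+ 2 \in C)].

Lemma extender_group_set (C : {group gT}) t :
  t \in extenders C -> group_set (C :|: C :* t).
Proof.
case/setIdP=> _ /andP[nCt t2C]; have nCti : t^-1 \in 'N(C) by rewrite groupV.
have tC c : c \in C -> t * c = c ^ t^-1 * t by move=> Cc; rewrite conjgE invgK !mulgA mulgKV.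
apply/group_setP; split=> [|u v]; first by rewrite inE group1.
rewrite !inE => /orP[Cu | /rcosetP[a Ca ->]] /orP[Cv | /rcosetP[b Cb ->]].
- by rewrite groupM.
- by apply/orP; right; apply/rcosetP; exists (u * b); rewrite ?groupM ?mulgA.
- apply/orP; right; apply/rcosetP; exists (a * v ^ t^-1); last by rewrite -mulgA tC ?mulgA.
  by rewrite groupM ?(memJ_norm _ nCti).
- apply/orP; left; rewrite -mulgA (mulgA t) tC // -(mulgA _ t) -expg2.
  by rewrite groupM // groupM // memJ_norm.
Qed.

Lemma extension_extender (C : {group gT}) t :
  C \subset A -> t \in extenders C -> <<C :|: C :* t>>%G \in extensions C.
Proof.
move=> sCA Ct; have /setIdP[/setDP[Gt nAt] _] := Ct.
rewrite inE /= (gen_set_id (extender_group_set Ct)); apply/and3P; split.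
- rewrite subUset (subset_trans sCA sAG) /=; apply/subsetP=> _ /rcosetP[c Cc ->].
  by rewrite groupM ?Gt // (subsetP sAG) ?(subsetP sCA).
- by apply/subsetPn; exists t; rewrite // inE rcoset_refl orbT.
apply/eqP/setP=> u; rewrite !inE andb_orl; apply/orP/idP=> [[/andP[] // | /andP[]]|Cu].
  by case/rcosetP=> c Cc -> Act; case/negP: nAt; rewrite -(groupMl _ (subsetP sCA c Cc)).
by left; rewrite Cu (subsetP sCA).
Qed.

Lemma extensionE (H : {group gT}) C t :
  H \in extensions C -> t \in H :\: A -> H :=: C :|: C :* t.
Proof.
case/setIdP=> sHG /andP[_ /eqP <-] H't.
by rewrite -(setD_index2 sHG H't) setID.
Qed.

Lemma extension_sub_extenders (H : {group gT}) C :
  H \in extensions C -> H :\: A \subset extenders C.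
Proof.
case/setIdP=> sHG /andP[_ /eqP <-]; apply/subsetP=> t H't.
have /setDP[Ht nAt] := H't; have Gt := subsetP sHG t Ht.
have G't : t \in G :\: A by rewrite inE nAt.
rewrite inE G't /=; apply/andP; split; last by rewrite inE groupX // expg2 index2_mulg_out.
have nAG := normal_norm (index2_normal sAG iGA).
by rewrite -sub1set normsI // sub1set ?(subsetP (normG H)) ?(subsetP nAG).
Qed.

Lemma card_extenders (C : {group gT}) :
  C \subset A -> #|extenders C| = (#|extensions C| * #|C|)%N.
Proof.
(* Group the extenders t by the extension <<C :|: C :* t>> they generate. *)
move=> sCA; rewrite -sum1_card (partition_big (fun t => <<C :|: C :* t>>%G)
  (mem (extensions C))) => [|t]; last exact: extension_extender.
rewrite -sum_nat_const; apply: eq_bigr => H extH.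
have /setIdP[sHG /andP[/subsetPn[t Ht nAt] /eqP HA]] := extH.
have H't : t \in H :\: A by rewrite inE nAt.
rewrite -(card_rcoset C t) -HA -(setD_index2 sHG H't) HA sum1dep_card.
apply: eq_card => u; rewrite inE.
apply/andP/idP=> [[Cu /eqP <-] | H'u].
  have /setIdP[/setDP[_ nAu] _] := Cu.
  by rewrite inE nAu mem_gen // inE rcoset_refl orbT.
have Cu := subsetP (extension_sub_extenders extH) u H'u; split=> //.
by apply/eqP/val_inj; rewrite /= (gen_set_id (extender_group_set Cu)) (extensionE extH H'u).
Qed.

Lemma sum_subgroups_index2 (F F' : {set gT} -> nat) :
    (forall H : {group gT}, H \subset G -> ~~ (H \subset A) -> F H = F' (H :&: A)) ->
  \sum_(H in subgroups G) F H =
    \sum_(C in subgroups A) (F C + F' C * (#|extenders C| %/ #|C|)).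
Proof.
move=> FE; rewrite big_split (bigID (fun H : {group gT} => H \subset A)) /=.
congr (_ + _).
  apply: eq_bigl => H; rewrite !inE andb_idl // => sHA.
  exact: subset_trans sHA sAG.
rewrite (partition_big (fun H : {group gT} => (H :&: A)%G) (fun C => C \in subgroups A))
  => [|H _]; last by rewrite inE subsetIr.
apply: eq_bigr => C; rewrite inE => sCA.
rewrite card_extenders // mulnK // mulnC -sum_nat_const.
apply: eq_big => H; first by rewrite !inE andbA.
by case/andP=> /andP[]; rewrite inE => sHG nHA /eqP <-; apply: FE.
Qed.

End IndexTwo.

Lemma sum_subgroups_cycle (gT : finGroupType) (a : gT) (F : {group gT} -> nat) :
  \sum_(H in subgroups <[a]>) F H = \sum_(e <- divisors #[a]) F <[a ^+ e]>%G.
Proof.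
rewrite -big_enum -(big_map (fun e => <[a ^+ e]>%G) xpredT) /=.
apply/perm_big/uniq_perm; first exact: enum_uniq.
  rewrite map_inj_in_uniq ?divisors_uniq // => d e.
  rewrite -!dvdn_divisors // => da ea /(congr1 (fun H : {group gT} => #|H|)).
  have divK f : f %| #[a] -> #[a] %/ (#[a] %/ f) = f by move=> fa; rewrite divnA // mulKn.
  by rewrite /= -!orderE !orderXdiv // => de; rewrite -(divK d da) de divK.
move=> H; rewrite mem_enum inE; apply/idP/mapP => [sHa | [e _ ->]]; last exact: cycleX.
have Ha := cardSg sHa; rewrite -orderE in Ha.
have : H \in [set <[a ^+ (#[a] %/ #|H|)]>%G] by rewrite -cycle_sub_group // inE sHa /=.
move/set1P=> ->; exists (#[a] %/ #|H|) => //.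
by rewrite -dvdn_divisors // dvdn_div.
Qed.

Lemma mem_cycleX (gT : finGroupType) (a : gT) e i :
  e %| #[a] -> (a ^+ i \in <[a ^+ e]>) = (e %| i).
Proof.
move=> ea; apply/cycleP/idP => [[j /eqP] | /dvdnP[j ->]]; last first.
  by exists j; rewrite -expgM mulnC.
rewrite -expgM eq_expg_mod_order => /eqP E.
by rewrite /dvdn -(modn_dvdm i ea) E modn_dvdm // mulnC modnMl.
Qed.

Lemma cycle_sqrt (gT : finGroupType) (a : gT) e : e * 2 %| #[a] ->
  [set u in <[a]> | u ^+ 2 \in <[a ^+ (e * 2)]>] = <[a ^+ e]>.
Proof.
move=> e2a; have ea : e %| #[a] := dvdn_trans (dvdn_mulr 2 (dvdnn e)) e2a.
apply/setP=> u; rewrite inE; have [/cycleP[i ->] | nau] := boolP (u \in <[a]>).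
  by rewrite -expgM !mem_cycleX // dvdn_pmul2r.
by apply/esym; apply: contraNF nau; apply: (subsetP (cycleX a e)).
Qed.

Lemma expg_pair (gT1 gT2 : finGroupType) (u : gT1 * gT2) n :
  u ^+ n = (u.1 ^+ n, u.2 ^+ n).
Proof. by elim: n => [|n IHn]; rewrite ?expgS ?IHn //; case: u. Qed.

Lemma conjg_pair (gT1 gT2 : finGroupType) (u v : gT1 * gT2) :
  u ^ v = (u.1 ^ v.1, u.2 ^ v.2).
Proof. by []. Qed.

Lemma cycle_pair1g (gT1 gT2 : finGroupType) (c : gT2) :
  <[pair1g gT1 c]> = setX 1 <[c]>.
Proof. by rewrite -morphim_pair1g morphim_cycle ?inE. Qed.

Lemma Z2_expg2 (a : 'I_2) : a ^+ 2 = 1.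
Proof. by rewrite -[2](card_ord 2) -cardsT expg_cardG ?inE. Qed.

Lemma Z2_invg (a : 'I_2) : a^-1 = a.
Proof. by apply/eqP; rewrite eq_invg_mul -expg2 Z2_expg2. Qed.

Lemma Zp_conjg p (a b : 'I_p.+1) : a ^ b = a.
Proof. by rewrite conjgE [a * b]Zp_mulgC mulKg. Qed.

Section Z2xQuaternion.

Variables (Q : finGroupType) (x : Q) (k : nat).
Let z := x ^+ (2 ^ k.-1)%N.
Hypotheses (k_gt0 : 0 < k) (oQ : #|Q| = (2 ^ k.+1)%N) (ox : #[x] = (2 ^ k)%N).
Hypothesis expg2_out : forall t, t \notin <[x]> -> t ^+ 2 = z.
Hypothesis conjg_out : forall c t, c \in <[x]> -> t \notin <[x]> -> c ^ t = c^-1.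

Local Notation gT := ('I_2 * Q)%type.
Let G : {group gT} := [set: gT]%G.
Let A : {group gT} := setX_group [set: 'I_2]%G <[x]>%G.
Let xx := pair1g 'I_2 x.
Let B : {group gT} := <[xx]>%G.
Let w := pair1g 'I_2 z.

Lemma mem_A t : (t \in A) = (t.2 \in <[x]>).
Proof. by rewrite inE in_setT. Qed.

Lemma card_A : #|A| = (2 ^ k.+1)%N.
Proof. by rewrite cardsX cardsT card_ord -orderE ox expnS. Qed.

Lemma index_A : #|G : A| = 2%N.
Proof.
rewrite -divgS ?subsetT // card_A cardsT card_prod card_ord oQ.
by rewrite mulnK ?expn_gt0.
Qed.

Lemma cycle_xxX e : <[xx ^+ e]> = setX 1 <[x ^+ e]>.
Proof. by rewrite -cycle_pair1g expg_pair expg1n. Qed.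

Lemma mem_B t : (t \in B) = (t.1 == 1) && (t.2 \in <[x]>).
Proof. by rewrite /= cycle_pair1g !inE. Qed.

Lemma sBA : B \subset A.
Proof. by rewrite cycle_subG mem_A cycle_id. Qed.

Lemma card_cycle_xxX i : i <= k -> #|<[xx ^+ (2 ^ i)%N]>| = (2 ^ (k - i))%N.
Proof.
move=> ik; rewrite cycle_xxX cardsX cards1 mul1n -orderE orderXdiv ox ?dvdn_exp2l //.
by rewrite -expnB.
Qed.

Lemma order_xx : #[xx] = (2 ^ k)%N.
Proof. by rewrite orderE cycle_pair1g cardsX cards1 mul1n -orderE ox. Qed.

Lemma index_B : #|A : B| = 2%N.
Proof. by rewrite -divgS ?sBA // card_A -orderE order_xx expnS mulnK ?expn_gt0. Qed.

Lemma expg2_outA t : t \notin A -> t ^+ 2 = w.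
Proof. by rewrite mem_A expg_pair Z2_expg2 => /expg2_out ->. Qed.

Lemma conjg_outA c t : c \in A -> t \notin A -> c ^ t = c^-1.
Proof.
rewrite !mem_A => Ac nAt.
by case: c Ac => c1 c2 Ac; rewrite conjg_pair Zp_conjg conjg_out // /= -{1}(Z2_invg c1).
Qed.

Lemma norm_outA (C : {group gT}) t : C \subset A -> t \notin A -> t \in 'N(C).
Proof.
move=> sCA nAt; rewrite inE; apply/subsetP=> y; rewrite mem_conjg => Cy.
by rewrite -(conjgKV t y) conjg_outA ?groupV // (subsetP sCA).
Qed.

Lemma extenders_G (C : {group gT}) :
  C \subset A -> extenders G A C = if w \in C then G :\: A else set0.
Proof.
move=> sCA; apply/setP=> t; rewrite inE [t \in G :\: A]inE in_setT andbT.
have [At | nAt] := boolP (t \in A); first by case: ifP; rewrite ?in_set0 // in_setD At.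
by rewrite norm_outA // expg2_outA //; case: ifP; rewrite ?in_set0 // in_setD nAt in_setT.
Qed.

Lemma card_setD_GA : #|G :\: A| = (2 ^ k.+1)%N.
Proof.
rewrite cardsD setTI cardsT card_prod card_ord oQ card_A.
by rewrite mul2n -addnn addnK.
Qed.

(* For C \subset A, weight C #|C| counts the subgroups H of G with H :&: A = C
   (extenders_G and card_extenders). *)
Let weight (C : {set gT}) c := (1 + (w \in C) * (2 ^ k.+1 %/ c))%N.

Lemma card_subgroups_G : #|subgroups G| = (\sum_(C in subgroups A) weight C #|C|)%N.
Proof.
rewrite -sum1_card.
rewrite (sum_subgroups_index2 (subsetT A) index_A (F := fun=> 1%N) (F' := fun=> 1%N)) //.
apply: eq_bigr => C; rewrite inE => sCA; rewrite extenders_G // mul1n /weight.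
by case: (w \in C); rewrite ?card_setD_GA ?cards0 ?div0n ?mul1n ?mul0n.
Qed.

Lemma conjg_A c t : c \in A -> t \in A -> c ^ t = c.
Proof.
rewrite !mem_A => Ac At; rewrite conjg_pair Zp_conjg.
by rewrite conjgE (centsP (cycle_abelian x) _ Ac _ At) mulKg; case: c {Ac}.
Qed.

Lemma norm_A (C : {group gT}) t : C \subset A -> t \in A -> t \in 'N(C).
Proof.
move=> sCA At; rewrite inE; apply/subsetP=> y; rewrite mem_conjg => Cy.
by rewrite -(conjgKV t y) conjg_A ?groupV // (subsetP sCA).
Qed.

Lemma extenders_B e :
  extenders A B <[xx ^+ e]> = setX [set~ 1] [set q in <[x]> | q ^+ 2 \in <[x ^+ e]>].
Proof.
apply/setP=> -[t1 t2].
have nCt : t2 \in <[x]> -> <[xx ^+ e]> :^ (t1, t2) \subset <[xx ^+ e]>.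
  move=> At; have : (t1, t2) \in 'N(<[xx ^+ e]>).
    by rewrite norm_A ?mem_A ?(subset_trans (cycleX xx e) sBA).
  by rewrite inE.
rewrite !inE /= mem_B /=; case At: (t2 \in <[x]>); rewrite ?andbF // nCt //.
by rewrite cycle_xxX in_setX /= -!expg2 Z2_expg2 group1 !andbT.
Qed.

Lemma card_extenders_B i : i <= k ->
  #|extenders A B <[xx ^+ (2 ^ i)%N]>| = (2 ^ (k - i) * (if i == 0 then 1 else 2))%N.
Proof.
move=> ik; rewrite extenders_B cardsX cardsC1 card_ord mul1n.
case: i ik => [|i] ik /=.
  rewrite subn0 muln1 -ox orderE expg1; apply: eq_card => q.
  by rewrite inE andb_idr // => /groupX->.
rewrite expnSr cycle_sqrt; last by rewrite ox -expnSr dvdn_exp2l.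
rewrite -orderE orderXdiv ox ?dvdn_exp2l 1?ltnW // -expnB 1?ltnW // -expnSr.
by rewrite subnSK.
Qed.

Lemma w_in_cycle_xxX i : i <= k -> (w \in <[xx ^+ (2 ^ i)%N]>) = (i < k).
Proof.
move=> ik; rewrite cycle_xxX /w /pair1g in_setX !inE eqxx /= /z.
rewrite mem_cycleX; last by rewrite ox dvdn_exp2l.
by rewrite dvdn_Pexp2l //; lia.
Qed.

Lemma contribution_cycle_xxX i : i <= k ->
  let D := <[xx ^+ (2 ^ i)%N]> in
  (weight D #|D| + weight D (#|D| * 2) * (#|extenders A B D| %/ #|D|))%N =
  (if i == 0 then 5 else if i == k then 3 else 3 + 4 * 2 ^ i)%N.
Proof.
move=> ik D; rewrite /weight /D w_in_cycle_xxX // card_extenders_B // card_cycle_xxX //.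
have p_gt0 : (0 < 2 ^ (k - i))%N by rewrite expn_gt0.
have -> : (2 ^ k.+1 = 2 ^ (k - i) * 2 ^ i * 2)%N by rewrite -expnD -expnSr subnK.
rewrite -!mulnA !mulKn // divnMl // mulnK //.
have [-> | i_gt0] := posnP i; first by rewrite k_gt0.
have [-> | ne_ik] := eqVneq i k; first by rewrite ltnn.
rewrite ltn_neqAle ne_ik ik /=.
by move: (2 ^ i)%N => p; lia.
Qed.

Lemma card_subgroups_Z2xQ : #|subgroups [set: gT]| = (4 * 2 ^ k + 3 * k - 3)%N.
Proof.
rewrite card_subgroups_G (sum_subgroups_index2 sBA index_B
  (F := fun C => weight C #|C|) (F' := fun C => weight C (#|C| * 2))); last first.
  move=> H sHA nHB; rewrite /weight (card_index2_out sBA index_B sHA nHB) inE.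
  by rewrite (_ : w \in B) ?andbT // mem_B eqxx mem_cycle.
rewrite sum_subgroups_cycle order_xx divisors_pfactor // big_map.
rewrite -(sum_contributions k_gt0); apply: eq_big_seq => i; rewrite mem_iota => /andP[_ ik].
exact: contribution_cycle_xxX.
Qed.

End Z2xQuaternion.

Local Close Scope group_scope.

Theorem corollary2p4 (m : nat) (hm : 2 <= m) :
  let n := 2 ^ m.-1 in
  #|subgroups [set: Z2xQ (4 * n)]| =
    5 * sigma n + 3 * tau n - 2 * n + 2.
Proof.
move=> n; have m_gt2 : 2 < m.+1 by [].
have -> : (4 * n = 2 ^ m.+1)%N by rewrite /n -(prednK (ltnW hm)) !expnS mulnA.
have [[x y] genQ _] := generators_quaternion m_gt2 (isog_refl 'Q_(2 ^ m.+1)).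
have [[_ o4 inv] _ [_ _ inv2 _ _] _ _] := quaternion_structure m_gt2 genQ (isog_refl _).
have [oQ _ ox _] := genQ.
rewrite /Z2xQ (@card_subgroups_Z2xQ _ x m) ?(ltnW hm) -?cardsT //; first last.
- by move=> c t Xc nXt; apply: inv; rewrite // !inE andbT.
- move=> t nXt; have o4t : #[t]%g = 4 by apply: o4; rewrite !inE andbT.
  by apply: inv2; rewrite ?inE // orderXdiv o4t.
rewrite /n sigma_2expn tau_pfactor // prednK ?(ltnW hm) //.
have -> : 2 ^ m = 2 * 2 ^ m.-1 by rewrite -expnS prednK // ltnW.
by case: (2 ^ m.-1) (expn_gt0 2 m.-1) => // p _; lia.
Qed.
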